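(* Let $(F,+,\cdot)$ be a (left) near-field, $I$ an index set, and $\boldsymbol\sigma=(\sigma_i)_{i\in I}$, $\boldsymbol\rho=(\rho_i)_{i\in I}$ families of multiplicative automorphisms of $F$. Define an equivalence relation $\approx$ on $I$ by $i\approx j$ iff there is $\gamma\in F\setminus\{0\}$ such that $\sigma_i\circ\rho_i\circ\varphi_\gamma\circ(\sigma_j\circ\rho_j)^{-1}$ is a near-field automorphism of $(F,+,\cdot)$. Let $\mathcal T$ be a full set of representatives for $\approx$, for $t\in\mathcal T$ let $I_t$ be the class of $t$, $\boldsymbol\sigma_t=(\sigma_i)_{i\in I_t}$, $\boldsymbol\rho_t=(\rho_i)_{i\in I_t}$, and let $\Psi_t:F^{\boldsymbol\sigma_t,\boldsymbol\rho_t}\to F^{\boldsymbol\sigma,\boldsymbol\rho}$ send $(\alpha_i)_{i\in I_t}$ to $(\beta_i)_{i\in I}$ with $\beta_i=\alpha_i$ for $i\in I_t$ and $\beta_i=0$ otherwise. Then $\{\Psi_t(F^{\boldsymbol\sigma_t,\boldsymbol\rho_t})\}_{t\in\mathcal T}$ is a regular decomposition family for $F^{\boldsymbol\sigma,\boldsymbol\rho}$.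
   Context: A (left) near-field is $(F,+,\cdot,0,1)$ where $(F,\cdot,1)$ is a monoid, $(F\setminus\{0\},\cdot)$ is a group, $(F,+,0)$ is an abelian group, and $\alpha(\beta+\gamma)=\alpha\beta+\alpha\gamma$. A multiplicative automorphism is a monoid automorphism of $(F,\cdot)$; a near-field automorphism preserves both $+$ and $\cdot$. For $\tau$ multiplicative, $\alpha+_\tau\beta=\tau^{-1}(\tau(\alpha)+\tau(\beta))$; $\varphi_\gamma(\alpha)=\gamma^{-1}\alpha\gamma$. For families $\boldsymbol\sigma=(\sigma_i)_{i\in J}$, $\boldsymbol\rho=(\rho_i)_{i\in J}$, $F^{\boldsymbol\sigma,\boldsymbol\rho}$ is the set of finitely supported $(\alpha_i)_{i\in J}\in F^J$ with addition $(\alpha_i)+_{\boldsymbol\sigma}(\beta_i)=(\alpha_i+_{\sigma_i}\beta_i)$ and scalar multiplication $\alpha\cdot_{\boldsymbol\rho}(\alpha_i)=(\rho_i(\alpha)\alpha_i)$; it is a near-vector space over $F$. For a near-vector space $V$: the quasi-kernel is $Q(V)=\{u:\forall\alpha,\beta\ \exists\gamma,\ \alpha u+\beta u=\gamma u\}$; a subspace is a nonempty subset closed under addition and scalar multiplication; $u,v\in Q(V)\setminus\{0\}$ are compatible if $u+\lambda v\in Q(V)$ for some $\lambda\in F\setminus\{0\}$; $V$ is regular if any two elements of $Q(V)\setminus\{0\}$ are compatible; a maximal regular subspace is a subspace that is regular (as a near-vector space) and maximal under inclusion among such. A family $\{V_i\}$ of subspaces of $V$ is a regular decomposition family if $V=\bigoplus_i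 V_i$ (internal direct sum) and each $V_i$ is a maximal regular subspace of $V$. *)

From Stdlib Require Import List ClassicalEpsilon.
Set Implicit Arguments.
Unset Strict Implicit.
Import ListNotations.



Record nearField := NearField {
  nf_car :> Type;
  nf_add : nf_car -> nf_car -> nf_car;
  nf_mul : nf_car -> nf_car -> nf_car;
  nf_zero : nf_car;
  nf_one : nf_car;
  nf_opp : nf_car -> nf_car;
  nf_inv : nf_car -> nf_car;
  nf_addA : forall a b c, nf_add a (nf_add b c) = nf_add (nf_add a b) c;
  nf_addC : forall a b, nf_add a b = nf_add b a;
  nf_add0 : forall a, nf_add nf_zero a = a;
  nf_addN : forall a, nf_add (nf_opp a) a = nf_zero;
  nf_mulA : forall a b c, nf_mul a (nf_mul b c) = nf_mul (nf_mul a b) c;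
  nf_mul1l : forall a, nf_mul nf_one a = a;
  nf_mul1r : forall a, nf_mul a nf_one = a;
  nf_one_neq0 : nf_one <> nf_zero;
  nf_mul_neq0 : forall a b, a <> nf_zero -> b <> nf_zero -> nf_mul a b <> nf_zero;
  nf_inv_neq0 : forall a, a <> nf_zero -> nf_inv a <> nf_zero;
  nf_mulVl : forall a, a <> nf_zero -> nf_mul (nf_inv a) a = nf_one;
  nf_mulVr : forall a, a <> nf_zero -> nf_mul a (nf_inv a) = nf_one;
  nf_mulDr : forall a b c, nf_mul a (nf_add b c) = nf_add (nf_mul a b) (nf_mul a c)
}.

Section NF.
Variable F : nearField.
Local Notation "a + b" := (nf_add a b).
Local Notation "a * b" := (nf_mul a b).
Local Notation "0" := (nf_zero F).
Local Notation "1" := (nf_one F).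

Definition bijective_fun (f : F -> F) : Prop :=
  (forall x y, f x = f y -> x = y) /\ (forall y, exists x, f x = y).

Definition mult_aut (f : F -> F) : Prop :=
  bijective_fun f /\ (forall a b, f (a * b) = f a * f b) /\ f 1 = 1.

Definition nf_aut (f : F -> F) : Prop :=
  bijective_fun f /\ (forall a b, f (a + b) = f a + f b)
  /\ (forall a b, f (a * b) = f a * f b).

(* inverse map (the genuine inverse when f is bijective) *)
Definition finv (f : F -> F) (y : F) : F :=
  epsilon (inhabits 0) (fun x => f x = y).

Definition phi (g : F) (a : F) : F := nf_inv g * a * g.

Definition add_tau (tau : F -> F) (a b : F) : F := finv tau (tau a + tau b).

End NF.

Section NVS.
Variables (F : nearField) (V : Type) (vadd : V -> V -> V) (vzero : V)
          (smul : F -> V -> V).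

Definition quasi_kernel (W : V -> Prop) (u : V) : Prop :=
  W u /\ forall a b : F, exists c : F, vadd (smul a u) (smul b u) = smul c u.

Definition compatible (W : V -> Prop) (u v : V) : Prop :=
  quasi_kernel W u /\ u <> vzero /\ quasi_kernel W v /\ v <> vzero /\
  exists l : F, l <> nf_zero F /\ quasi_kernel W (vadd u (smul l v)).

Definition regular (W : V -> Prop) : Prop :=
  forall u v, quasi_kernel W u -> u <> vzero ->
              quasi_kernel W v -> v <> vzero -> compatible W u v.

Definition subspace (Vc W : V -> Prop) : Prop :=
  (forall v, W v -> Vc v) /\ (exists w, W w) /\
  (forall u v, W u -> W v -> W (vadd u v)) /\
  (forall (a : F) u, W u -> W (smul a u)).

Definition maximal_regular_subspace (Vc W : V -> Prop) : Prop :=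
  subspace Vc W /\ regular W /\
  forall W', subspace Vc W' -> regular W' -> (forall v, W v -> W' v) ->
             forall v, W' v -> W v.

Definition vsum (l : list V) : V := fold_right vadd vzero l.

Definition internal_direct_sum (T : Type) (P : T -> Prop) (Ws : T -> V -> Prop)
    (Vc : V -> Prop) : Prop :=
  (forall v, Vc v <->
     exists l : list (T * V), NoDup (map fst l) /\
       Forall (fun p => P (fst p) /\ Ws (fst p) (snd p)) l /\
       v = vsum (map snd l)) /\
  (forall l : list (T * V), NoDup (map fst l) ->
       Forall (fun p => P (fst p) /\ Ws (fst p) (snd p)) l ->
       vsum (map snd l) = vzero -> Forall (fun p => snd p = vzero) l).

Definition regular_decomposition_family (T : Type) (P : T -> Prop)
    (Ws : T -> V -> Prop) (Vc : V -> Prop) : Prop :=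
  internal_direct_sum P Ws Vc /\
  forall t, P t -> maximal_regular_subspace Vc (Ws t).

End NVS.

Section Fsr.
Variables (F : nearField) (I : Type).

Definition fin_supp (J : Type) (a : J -> F) : Prop :=
  exists s : list J, forall j, a j <> nf_zero F -> In j s.

Definition Fsr_car (a : I -> F) : Prop := fin_supp a.

Definition Fsr_add (sigma : I -> F -> F) (a b : I -> F) : I -> F :=
  fun i => add_tau (sigma i) (a i) (b i).

Definition Fsr_smul (rho : I -> F -> F) (c : F) (a : I -> F) : I -> F :=
  fun i => nf_mul (rho i c) (a i).

Definition Fsr_zero : I -> F := fun _ => nf_zero F.

Definition approx (sigma rho : I -> F -> F) (i j : I) : Prop :=
  exists g : F, g <> nf_zero F /\
    nf_aut (fun x => sigma i (rho i (phi g
              (finv (fun y => sigma j (rho j y)) x)))).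

Definition full_set_of_reps (R : I -> I -> Prop) (Tset : I -> Prop) : Prop :=
  forall i, exists t, (Tset t /\ R i t) /\
                      forall t', Tset t' /\ R i t' -> t' = t.

Definition Psi (sigma rho : I -> F -> F) (t : I)
    (a : {i : I | approx sigma rho i t} -> F) : I -> F :=
  fun i => match excluded_middle_informative (approx sigma rho i t) with
           | left h => a (exist _ i h)
           | right _ => nf_zero F
           end.

Definition Psi_image (sigma rho : I -> F -> F) (t : I) (v : I -> F) : Prop :=
  exists a : {i : I | approx sigma rho i t} -> F,
    fin_supp a /\ v = @Psi sigma rho t a.

End Fsr.

(* Write theta_i := sigma_i o rho_i.  Read through sigma_i, the i-th coordinate of
   F^{sigma,rho} adds as F does and is scaled by c through multiplication by theta_i c.
   Hence u is in the quasi-kernel iff the triples (a x_i, b x_i, c x_i), rho_i x_i = u_i,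
   satisfy theta_i p + theta_i q = theta_i r at every coordinate simultaneously, and
   i ~ t says precisely that phi_gamma carries this addition pattern of coordinate t onto
   that of coordinate i.  So coordinates of one class can be matched by a right shift,
   which makes each class space regular, while any two nonzero coordinates of a
   quasi-kernel vector lie in one class.  A regular subspace strictly containing the
   class space of t would contain a quasi-kernel vector supported outside that class,
   which is not compatible with the unit vector e_t.  Splitting a finitely supported
   vector by classes gives the direct sum. *)

From Stdlib Require Import List ClassicalEpsilon Classical FunctionalExtensionality
  ProofIrrelevance PropExtensionality Wf_nat.
Import ListNotations.
Set Implicit Arguments.
Unset Strict Implicit.

Section NearField.
Variable F : nearField.
Local Notation "a + b" := (nf_add a b).
Local Notation "a * b" := (nf_mul a b).
Local Notation "- a" := (nf_opp a).
Local Notation "0" := (nf_zero F).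
Local Notation "1" := (nf_one F).

Lemma nf_addr0 (a : F) : a + 0 = a.
Proof. rewrite nf_addC; apply nf_add0. Qed.

Lemma nf_addrN (a : F) : a + - a = 0.
Proof. rewrite nf_addC; apply nf_addN. Qed.

Lemma nf_addrI (a b c : F) : a + b = a + c -> b = c.
Proof.
  intro H. rewrite <- (nf_add0 b), <- (nf_add0 c), <- (nf_addN a), <- !nf_addA, H.
  reflexivity.
Qed.

Lemma nf_addIr (a b c : F) : b + a = c + a -> b = c.
Proof. rewrite (nf_addC b), (nf_addC c); apply nf_addrI. Qed.

Lemma nf_addACA (a b c d : F) : (a + b) + (c + d) = (a + c) + (b + d).
Proof. rewrite <- !nf_addA; f_equal; rewrite !nf_addA; f_equal; apply nf_addC. Qed.

Lemma nf_oppr0 : - 0 = (0 : F).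
Proof. rewrite <- (nf_addr0 (- 0)); apply nf_addN. Qed.

Lemma nf_mulr0 (a : F) : a * 0 = 0.
Proof. apply (@nf_addrI (a * 0)); rewrite <- nf_mulDr, !nf_addr0; reflexivity. Qed.

Lemma nf_mul0r (a : F) : 0 * a = 0.
Proof.
  destruct (classic (a = 0)) as [->|Ha]; [apply nf_mulr0|].
  apply NNPP; intro H; apply (nf_mul_neq0 H (nf_inv_neq0 Ha)).
  rewrite <- nf_mulA, nf_mulVr, nf_mul1r by exact Ha; reflexivity.
Qed.

Lemma nf_mulrI (a b c : F) : a <> 0 -> a * b = a * c -> b = c.
Proof.
  intros Ha H.
  rewrite <- (nf_mul1l b), <- (nf_mul1l c), <- (nf_mulVl Ha), <- !nf_mulA, H.
  reflexivity.
Qed.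

Lemma nf_mulIr (a b c : F) : a <> 0 -> b * a = c * a -> b = c.
Proof.
  intros Ha H.
  rewrite <- (nf_mul1r b), <- (nf_mul1r c), <- (nf_mulVr Ha), !nf_mulA, H.
  reflexivity.
Qed.

Lemma nf_mul_eq0 (a b : F) : a * b = 0 -> a = 0 \/ b = 0.
Proof.
  intro H; destruct (classic (a = 0)); auto; destruct (classic (b = 0)); auto.
  exfalso; exact (nf_mul_neq0 H0 H1 H).
Qed.

Lemma nf_mulKV (a b : F) : a <> 0 -> b * nf_inv a * a = b.
Proof. intro Ha; rewrite <- nf_mulA, nf_mulVl, nf_mul1r by exact Ha; reflexivity. Qed.

Lemma nf_mulVK (a b : F) : a <> 0 -> b * a * nf_inv a = b.
Proof. intro Ha; rewrite <- nf_mulA, nf_mulVr, nf_mul1r by exact Ha; reflexivity. Qed.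

Lemma nf_invr1 : nf_inv 1 = (1 : F).
Proof. rewrite <- (nf_mul1r (nf_inv 1)); apply nf_mulVl, nf_one_neq0. Qed.

Lemma nf_mulrN1 (a : F) : a * - (1) = - a.
Proof.
  apply (@nf_addrI a); rewrite <- (nf_mul1r a) at 1.
  rewrite <- nf_mulDr, !nf_addrN; apply nf_mulr0.
Qed.

Lemma nf_mulN1N1 : - (1) * - (1) = (1 : F).
Proof.
  rewrite nf_mulrN1; apply (@nf_addrI (- (1))); rewrite nf_addN, nf_addrN; reflexivity.
Qed.

Lemma nf_sqr_eq1 (y : F) : y * y = 1 -> y = 1 \/ y = - (1).
Proof.
  intro H; destruct (classic (y + 1 = 0)) as [H0|H0].
  - right; apply (@nf_addIr 1); rewrite H0, nf_addN; reflexivity.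
  - left; apply (nf_mulIr H0).
    rewrite nf_mulDr, H, nf_mul1r, nf_mul1l, nf_addC; reflexivity.
Qed.

(* [-1 * x = x * y] with [y := x^-1 * -1 * x], and [y * y = 1] forces [y = 1] or
   [y = -1]; in the first case [-1 = 1]. *)
Lemma nf_mulN1r (x : F) : - (1) * x = - x.
Proof.
  destruct (classic (x = 0)) as [->|Hx]; [rewrite nf_mulr0, nf_oppr0; reflexivity|].
  set (y := nf_inv x * - (1) * x).
  assert (Hxy : - (1) * x = x * y).
  { unfold y; rewrite !nf_mulA, nf_mulVr, nf_mul1l by exact Hx; reflexivity. }
  assert (Hy : y * y = 1).
  { unfold y; rewrite !nf_mulA, nf_mulVK by exact Hx.
    rewrite <- (nf_mulA (nf_inv x)), nf_mulN1N1, nf_mul1r; apply nf_mulVl, Hx. }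
  rewrite Hxy; destruct (nf_sqr_eq1 Hy) as [Hy1|HyN1]; rewrite ?HyN1; [|apply nf_mulrN1].
  rewrite Hy1, nf_mul1r in Hxy |- *; rewrite <- (nf_mul1l x) in Hxy at 2.
  apply nf_mulIr in Hxy; [|exact Hx]; rewrite <- nf_mulrN1, Hxy, nf_mul1r; reflexivity.
Qed.

Lemma phi1 (x : F) : phi 1 x = x.
Proof. unfold phi; rewrite nf_invr1, nf_mul1l, nf_mul1r; reflexivity. Qed.

Lemma phiM (g x y : F) : g <> 0 -> phi g (x * y) = phi g x * phi g y.
Proof.
  intro Hg; unfold phi; rewrite !nf_mulA; f_equal.
  rewrite <- (nf_mulA _ g), nf_mulVr, nf_mul1r by exact Hg; reflexivity.
Qed.

Lemma phi_inj (g x y : F) : g <> 0 -> phi g x = phi g y -> x = y.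
Proof.
  intros Hg H; apply (nf_mulIr Hg), (nf_mulrI (nf_inv_neq0 Hg)).
  rewrite !nf_mulA; exact H.
Qed.

Lemma phi_conjK (g x : F) : g <> 0 -> phi g (g * x * nf_inv g) = x.
Proof.
  intro Hg; unfold phi; rewrite !nf_mulA, nf_mulKV, nf_mulVl, nf_mul1l by exact Hg.
  reflexivity.
Qed.

End NearField.

Section MultAut.
Variable F : nearField.
Local Notation "a * b" := (nf_mul a b).
Local Notation "- a" := (nf_opp a).
Local Notation "0" := (nf_zero F).
Local Notation "1" := (nf_one F).
Variable f : F -> F.
Hypothesis Hf : mult_aut f.

Lemma mult_aut_inj x y : f x = f y -> x = y.
Proof. apply (proj1 (proj1 Hf)). Qed.

Lemma mult_aut_surj y : exists x, f x = y.
Proof. apply (proj2 (proj1 Hf)). Qed.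

Lemma mult_autM x y : f (x * y) = f x * f y.
Proof. apply (proj1 (proj2 Hf)). Qed.

Lemma mult_aut1 : f 1 = 1.
Proof. apply (proj2 (proj2 Hf)). Qed.

Lemma mult_aut0 : f 0 = 0.
Proof.
  destruct mult_aut_surj with 0 as [z Hz].
  transitivity (f (0 * z)); [rewrite nf_mul0r; reflexivity|].
  rewrite mult_autM, Hz; apply nf_mulr0.
Qed.

Lemma mult_aut_eq0 x : f x = 0 -> x = 0.
Proof. intro H; apply mult_aut_inj; rewrite H, mult_aut0; reflexivity. Qed.

Lemma mult_autN1 : f (- (1)) = - (1).
Proof.
  assert (Hsq : f (- (1)) * f (- (1)) = 1)
    by (rewrite <- mult_autM, nf_mulN1N1; apply mult_aut1).
  destruct (nf_sqr_eq1 Hsq) as [H1|H1]; [|exact H1].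
  assert (HN1 : - (1) = 1) by (apply mult_aut_inj; rewrite H1, mult_aut1; reflexivity).
  rewrite H1, HN1; reflexivity.
Qed.

Lemma finvK y : f (finv f y) = y.
Proof. apply (epsilon_spec (inhabits 0) (fun x => f x = y)), mult_aut_surj. Qed.

Lemma finv_eq x y : f x = y -> finv f y = x.
Proof. intro H; apply mult_aut_inj; rewrite finvK; symmetry; exact H. Qed.

End MultAut.

Lemma mult_aut_comp (F : nearField) (f g : F -> F) :
  mult_aut f -> mult_aut g -> mult_aut (fun x => f (g x)).
Proof.
  intros Hf Hg; split; [split|split].
  - intros x y H; apply (mult_aut_inj Hg), (mult_aut_inj Hf), H.
  - intro y; destruct (mult_aut_surj Hf y) as [z <-].
    destruct (mult_aut_surj Hg z) as [x <-]; exists x; reflexivity.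
  - intros a b; rewrite (mult_autM Hg), (mult_autM Hf); reflexivity.
  - rewrite (mult_aut1 Hg), (mult_aut1 Hf); reflexivity.
Qed.

Definition classic_eq_dec (A : Type) (x y : A) : {x = y} + {x <> y} :=
  excluded_middle_informative (x = y).

Section Fsr.
Variables (F : nearField) (I : Type) (sigma rho : I -> F -> F).
Hypotheses (Hsigma : forall i, mult_aut (sigma i)) (Hrho : forall i, mult_aut (rho i)).
Local Notation "a + b" := (nf_add a b).
Local Notation "a * b" := (nf_mul a b).
Local Notation "- a" := (nf_opp a).
Local Notation "0" := (nf_zero F).
Local Notation "1" := (nf_one F).
Local Notation vadd := (Fsr_add sigma).
Local Notation smul := (Fsr_smul rho).
Local Notation vzero := (@Fsr_zero F I).
Local Notation vsum := (vsum vadd vzero).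

Definition theta (i : I) (x : F) : F := sigma i (rho i x).

Lemma mult_aut_theta i : mult_aut (theta i).
Proof. exact (mult_aut_comp (Hsigma i) (Hrho i)). Qed.

Lemma sigma_Fsr_add u v i : sigma i (vadd u v i) = sigma i (u i) + sigma i (v i).
Proof. apply finvK, Hsigma. Qed.

Lemma sigma_Fsr_smul c u i : sigma i (smul c u i) = theta i c * sigma i (u i).
Proof. unfold theta; apply mult_autM, Hsigma. Qed.

Lemma sigma_Fsr_smul_rho a x u i : rho i x = u i -> sigma i (smul a u i) = theta i (a * x).
Proof.
  intro Hx; unfold Fsr_smul, theta; rewrite <- Hx, (mult_autM (Hrho i)); reflexivity.
Qed.

Lemma sigma_Fsr_oppr v i : sigma i (smul (- (1)) v i) = - sigma i (v i).
Proof.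
  rewrite sigma_Fsr_smul, (mult_autN1 (mult_aut_theta i)); apply nf_mulN1r.
Qed.

Lemma Fsr_ext u v : (forall i, sigma i (u i) = sigma i (v i)) -> u = v.
Proof. intro H; extensionality i; apply (mult_aut_inj (Hsigma i)), H. Qed.

Lemma Fsr_neq0 u : u <> vzero -> exists i, u i <> 0.
Proof.
  intro Hu; apply NNPP; intro H; apply Hu; extensionality i.
  apply NNPP; intro Hi; apply H; exists i; exact Hi.
Qed.

Lemma Fsr_add0l_at u v i : u i = 0 -> vadd u v i = v i.
Proof.
  intro Hu; apply (mult_aut_inj (Hsigma i)).
  rewrite sigma_Fsr_add, Hu, (mult_aut0 (Hsigma i)); apply nf_add0.
Qed.

Lemma Fsr_addr0_at u v i : v i = 0 -> vadd u v i = u i.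
Proof.
  intro Hv; apply (mult_aut_inj (Hsigma i)).
  rewrite sigma_Fsr_add, Hv, (mult_aut0 (Hsigma i)); apply nf_addr0.
Qed.

Lemma Fsr_smul0_at c u i : u i = 0 -> smul c u i = 0.
Proof. intro Hu; unfold Fsr_smul; rewrite Hu; apply nf_mulr0. Qed.

Lemma Fsr_car_add u v : Fsr_car u -> Fsr_car v -> Fsr_car (vadd u v).
Proof.
  intros [s1 H1] [s2 H2]; exists (s1 ++ s2); intros j Hj; apply in_or_app.
  destruct (classic (u j = 0)) as [Hu|Hu]; [|left; auto].
  right; apply H2; rewrite <- (Fsr_add0l_at v Hu); exact Hj.
Qed.

Lemma Fsr_car_smul c u : Fsr_car u -> Fsr_car (smul c u).
Proof.
  intros [s Hs]; exists s; intros j Hj; apply Hs; intro Hu; apply Hj, Fsr_smul0_at, Hu.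
Qed.

Definition theta_sum (k : I) (p q r : F) : Prop := theta k p + theta k q = theta k r.

Lemma theta_sum_exists k p q : exists r, theta_sum k p q r.
Proof.
  destruct (mult_aut_surj (mult_aut_theta k) (theta k p + theta k q)) as [r Hr].
  exists r; symmetry; exact Hr.
Qed.

Lemma theta_sum_unique k p q r r' : theta_sum k p q r -> theta_sum k p q r' -> r = r'.
Proof.
  unfold theta_sum; intros H H'; apply (mult_aut_inj (mult_aut_theta k)).
  rewrite <- H, <- H'; reflexivity.
Qed.

Lemma theta_sum_mull s k p q r : theta_sum k p q r -> theta_sum k (s * p) (s * q) (s * r).
Proof.
  unfold theta_sum; intro H; rewrite !(mult_autM (mult_aut_theta k)), <- nf_mulDr, H.
  reflexivity.
Qed.

Definition theta_conj (k t : I) (g x : F) : F := theta k (phi g (finv (theta t) x)).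

Lemma approx_theta_conj k t :
  approx sigma rho k t <-> exists g, g <> 0 /\ nf_aut (theta_conj k t g).
Proof. reflexivity. Qed.

Lemma theta_conj_theta k t g y : theta_conj k t g (theta t y) = theta k (phi g y).
Proof.
  unfold theta_conj; rewrite (finv_eq (mult_aut_theta t) (eq_refl (theta t y))).
  reflexivity.
Qed.

Lemma theta_finv t x : theta t (finv (theta t) x) = x.
Proof. apply finvK, mult_aut_theta. Qed.

Lemma theta_conj_bijective k t g : g <> 0 -> bijective_fun (theta_conj k t g).
Proof.
  intro Hg; split.
  - intros x y H; apply (mult_aut_inj (mult_aut_theta k)), (phi_inj Hg) in H.
    rewrite <- (theta_finv t x), <- (theta_finv t y), H; reflexivity.
  - intro y; destruct (mult_aut_surj (mult_aut_theta k) y) as [z <-].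
    exists (theta t (g * z * nf_inv g)); rewrite theta_conj_theta, phi_conjK by exact Hg.
    reflexivity.
Qed.

Lemma theta_conjM k t g x y :
  g <> 0 -> theta_conj k t g (x * y) = theta_conj k t g x * theta_conj k t g y.
Proof.
  intro Hg; rewrite <- (theta_finv t x), <- (theta_finv t y).
  rewrite <- (mult_autM (mult_aut_theta t)).
  rewrite !theta_conj_theta, phiM by exact Hg; apply (mult_autM (mult_aut_theta k)).
Qed.

Lemma approx_theta_sum k t g : g <> 0 -> nf_aut (theta_conj k t g) ->
  forall p q r, theta_sum t p q r <-> theta_sum k (phi g p) (phi g q) (phi g r).
Proof.
  intros Hg [[Hinj _] [Hadd _]] p q r; unfold theta_sum; rewrite <- !(theta_conj_theta k t g).
  split; intro H; [rewrite <- H; symmetry; apply Hadd|apply Hinj; rewrite Hadd; exact H].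
Qed.

Lemma approx_of_theta_sum k t g : g <> 0 ->
  (forall p q r, theta_sum t p q r -> theta_sum k (phi g p) (phi g q) (phi g r)) ->
  approx sigma rho k t.
Proof.
  intros Hg Hsum; apply approx_theta_conj; exists g; split; [exact Hg|].
  split; [apply theta_conj_bijective, Hg|split; [|intros; apply theta_conjM, Hg]].
  intros x y; rewrite <- (theta_finv t x), <- (theta_finv t y).
  destruct (theta_sum_exists t (finv (theta t) x) (finv (theta t) y)) as [r Hr].
  rewrite Hr, !theta_conj_theta; symmetry; apply Hsum, Hr.
Qed.

Lemma approx_refl t : approx sigma rho t t.
Proof.
  apply approx_of_theta_sum with 1; [apply nf_one_neq0|].
  intros p q r; rewrite !phi1; trivial.
Qed.

Lemma theta_sum_shift i j t : approx sigma rho i t -> approx sigma rho j t ->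
  exists d, d <> 0 /\ forall p q r, theta_sum i p q r -> theta_sum j (p * d) (q * d) (r * d).
Proof.
  intros [g1 [Hg1 Haut1]] [g2 [Hg2 Haut2]].
  set (d := nf_inv g1 * g2).
  assert (Hd : forall x, d * phi g2 (g1 * x * nf_inv g1) = x * d).
  { intro x; unfold d, phi; rewrite !nf_mulA, nf_mulVK, nf_mulVl, nf_mul1l by assumption.
    reflexivity. }
  exists d; split; [apply nf_mul_neq0; [apply nf_inv_neq0|]; assumption|].
  intros p q r H; rewrite <- !Hd; apply theta_sum_mull.
  apply (approx_theta_sum Hg2 Haut2), (approx_theta_sum Hg1 Haut1).
  rewrite !phi_conjK by exact Hg1; exact H.
Qed.

Definition Fsr_qk (u : I -> F) : Prop :=
  forall a b, exists c, vadd (smul a u) (smul b u) = smul c u.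

Lemma Fsr_qk_theta_sum u a b c i x : rho i x = u i ->
  vadd (smul a u) (smul b u) = smul c u -> theta_sum i (a * x) (b * x) (c * x).
Proof.
  intros Hx H; apply (f_equal (fun w => sigma i (w i))) in H.
  rewrite sigma_Fsr_add, !(sigma_Fsr_smul_rho _ Hx) in H; exact H.
Qed.

Lemma rho_preimage_neq0 i x : x <> 0 -> exists y, y <> 0 /\ rho i y = x.
Proof.
  intro Hx; destruct (mult_aut_surj (Hrho i) x) as [y Hy].
  exists y; split; [intros ->; apply Hx; rewrite <- Hy; apply mult_aut0, Hrho|exact Hy].
Qed.

Lemma Fsr_qk_add_smul u v l : Fsr_qk u ->
  (forall a b c, vadd (smul a u) (smul b u) = smul c u ->
     vadd (smul (a * l) v) (smul (b * l) v) = smul (c * l) v) ->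
  Fsr_qk (vadd u (smul l v)).
Proof.
  intros Hu Huv a b; destruct (Hu a b) as [c Hc]; exists c.
  pose proof (Huv a b c Hc) as Hv.
  apply Fsr_ext; intro i.
  apply (f_equal (fun w => sigma i (w i))) in Hc, Hv.
  rewrite sigma_Fsr_add, !sigma_Fsr_smul in Hc, Hv.
  rewrite !(mult_autM (mult_aut_theta i)) in Hv.
  rewrite sigma_Fsr_add, !sigma_Fsr_smul, !sigma_Fsr_add, !sigma_Fsr_smul.
  rewrite !nf_mulDr, nf_addACA, Hc, !nf_mulA, Hv; reflexivity.
Qed.

Definition class_space (t : I) (v : I -> F) : Prop :=
  Fsr_car v /\ forall i, ~ approx sigma rho i t -> v i = 0.

Lemma class_space_add t u v : class_space t u -> class_space t v -> class_space t (vadd u v).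
Proof.
  intros [Hu Hu0] [Hv Hv0]; split; [apply Fsr_car_add; assumption|].
  intros i Hi; rewrite Fsr_add0l_at; auto.
Qed.

Lemma class_space_smul t c v : class_space t v -> class_space t (smul c v).
Proof.
  intros [Hv Hv0]; split; [apply Fsr_car_smul; assumption|].
  intros i Hi; apply Fsr_smul0_at; auto.
Qed.

Lemma class_space_subspace t : subspace vadd smul (@Fsr_car F I) (class_space t).
Proof.
  split; [intros v []; assumption|].
  split; [exists vzero; split; [exists []; intros j Hj; exact (Hj eq_refl)|reflexivity]|].
  split; [apply class_space_add|intros; apply class_space_smul; assumption].
Qed.

Lemma class_space_neq0 t v : class_space t v -> v <> vzero ->
  exists i, approx sigma rho i t /\ v i <> 0.
Proof.
  intros [_ Hv0] Hv; destruct (Fsr_neq0 Hv) as [i Hi]; exists i; split; [|exact Hi].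
  apply NNPP; intro H; apply Hi, Hv0, H.
Qed.

(* Shifting by [d] carries the addition pattern of coordinate [i] to coordinate [j];
   with [rho_i x = u_i] and [rho_j y = v_j] this makes [u + (x d y^-1) v] quasi-kernel. *)
Lemma class_space_regular t : regular vadd vzero smul (class_space t).
Proof.
  intros u v [Wu Qu] Hu [Wv Qv] Hv.
  do 4 (split; [try split; assumption|]).
  destruct (class_space_neq0 Wu Hu) as [i [Hit Hi]].
  destruct (class_space_neq0 Wv Hv) as [j [Hjt Hj]].
  destruct (theta_sum_shift Hit Hjt) as [d [Hd Hshift]].
  destruct (rho_preimage_neq0 i Hi) as [x [Hx0 Hx]].
  destruct (rho_preimage_neq0 j Hj) as [y [Hy0 Hy]].
  set (l := x * d * nf_inv y).
  assert (Hl : forall z, z * l * y = z * x * d).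
  { intro z; unfold l; rewrite !nf_mulA, nf_mulKV by exact Hy0; reflexivity. }
  exists l; split; [apply nf_mul_neq0; [apply nf_mul_neq0|apply nf_inv_neq0]; assumption|].
  split; [apply class_space_add, class_space_smul; assumption|].
  apply Fsr_qk_add_smul; [exact Qu|]; intros a b c Hc.
  destruct (Qv (a * l) (b * l)) as [c' Hc'].
  assert (Hc'l : c' = c * l).
  { apply (nf_mulIr Hy0); rewrite Hl.
    apply (theta_sum_unique (Fsr_qk_theta_sum Hy Hc')).
    rewrite !Hl; apply Hshift, (Fsr_qk_theta_sum Hx Hc). }
  rewrite <- Hc'l; exact Hc'.
Qed.

(* The coordinates [t] and [k] of a quasi-kernel vector share their addition pattern,
   up to the conjugation by [g := x_t^-1 x_k] where [rho_t x_t = u_t], [rho_k x_k = u_k]. *)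
Lemma Fsr_qk_approx u k t : Fsr_qk u -> u t <> 0 -> u k <> 0 -> approx sigma rho k t.
Proof.
  intros Qu Hut Huk.
  destruct (rho_preimage_neq0 t Hut) as [xt [Hxt0 Hxt]].
  destruct (rho_preimage_neq0 k Huk) as [xk [Hxk0 Hxk]].
  set (g := nf_inv xt * xk).
  assert (Hphi : forall z, phi g z = nf_inv g * (z * nf_inv xt * xk)).
  { intro z; unfold phi, g; rewrite !nf_mulA; reflexivity. }
  apply approx_of_theta_sum with g; [apply nf_mul_neq0; [apply nf_inv_neq0|]; assumption|].
  intros p q r Hr.
  destruct (Qu (p * nf_inv xt) (q * nf_inv xt)) as [c Hc].
  pose proof (Fsr_qk_theta_sum Hxt Hc) as Ht; rewrite !nf_mulKV in Ht by exact Hxt0.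
  rewrite (theta_sum_unique Hr Ht), !Hphi, nf_mulVK by exact Hxt0.
  apply theta_sum_mull, (Fsr_qk_theta_sum Hxk Hc).
Qed.

Lemma Fsr_not_qk_cut v k : ~ Fsr_qk v -> v k <> 0 ->
  exists a b c, let w := vadd (vadd (smul a v) (smul b v)) (smul (- (1)) (smul c v)) in
    w k = 0 /\ w <> vzero.
Proof.
  intros Qv Hvk.
  apply not_all_ex_not in Qv; destruct Qv as [a Qv].
  apply not_all_ex_not in Qv; destruct Qv as [b Qv].
  destruct (rho_preimage_neq0 k Hvk) as [x [Hx0 Hx]].
  destruct (theta_sum_exists k (a * x) (b * x)) as [r Hr].
  exists a, b, (r * nf_inv x); split.
  - apply (mult_aut_inj (Hsigma k)).
    rewrite sigma_Fsr_add, sigma_Fsr_oppr, sigma_Fsr_add, !(sigma_Fsr_smul_rho _ Hx).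
    rewrite nf_mulKV, Hr, nf_addrN by exact Hx0; symmetry; apply mult_aut0, Hsigma.
  - intro Hw; apply Qv; exists (r * nf_inv x); apply Fsr_ext; intro j.
    apply (f_equal (fun w => sigma j (w j))) in Hw; unfold Fsr_zero in Hw.
    rewrite sigma_Fsr_add, sigma_Fsr_oppr, (mult_aut0 (Hsigma j)) in Hw.
    apply (nf_addIr (a := - sigma j (smul (r * nf_inv x) v j))).
    rewrite Hw, nf_addrN; reflexivity.
Qed.

Lemma Fsr_qk_below (W : (I -> F) -> Prop) :
  (forall u v, W u -> W v -> W (vadd u v)) -> (forall c v, W v -> W (smul c v)) ->
  forall v, W v -> Fsr_car v -> v <> vzero ->
  exists w, W w /\ Fsr_qk w /\ w <> vzero /\ forall j, w j <> 0 -> v j <> 0.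
Proof.
  intros Hadd Hsmul v Wv [s Hs]; revert v Wv Hs.
  induction s as [s IH] using (induction_ltof1 _ (@length I)); intros v Wv Hs Hv.
  destruct (classic (Fsr_qk v)) as [Qv|Qv]; [exists v; auto|].
  destruct (Fsr_neq0 Hv) as [k Hk].
  destruct (Fsr_not_qk_cut Qv Hk) as [a [b [c [Hwk Hw]]]].
  set (w := vadd (vadd (smul a v) (smul b v)) (smul (- (1)) (smul c v))) in *.
  assert (Hwv : forall j, w j <> 0 -> v j <> 0).
  { intros j Hj Hvj; apply Hj; unfold w.
    rewrite Fsr_addr0_at, Fsr_add0l_at; repeat apply Fsr_smul0_at; assumption. }
  destruct (IH (remove (@classic_eq_dec I) k s)) with w as [w' [Ww' [Qw' [Hw' Hw'w]]]]; auto.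
  - apply remove_length_lt, Hs, Hk.
  - unfold w; auto.
  - intros j Hj; apply in_in_remove; [intros ->; contradiction|apply Hs, Hwv, Hj].
  - exists w'; repeat split; auto.
Qed.

Definition Fsr_unit (t : I) (i : I) : F :=
  if excluded_middle_informative (i = t) then 1 else 0.

Lemma Fsr_unit_class_space t : class_space t (Fsr_unit t).
Proof.
  unfold Fsr_unit; split.
  - exists [t]; intros j Hj.
    destruct (excluded_middle_informative (j = t)) as [->|]; [left|]; congruence.
  - intros i Hi; destruct (excluded_middle_informative (i = t)) as [->|]; [|reflexivity].
    contradiction (Hi (approx_refl t)).
Qed.

Lemma Fsr_unit_qk t : Fsr_qk (Fsr_unit t).
Proof.
  intros a b; destruct (theta_sum_exists t a b) as [c Hc]; exists c.
  apply Fsr_ext; intro i; rewrite sigma_Fsr_add, !sigma_Fsr_smul; unfold Fsr_unit.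
  destruct (excluded_middle_informative (i = t)) as [->|].
  - rewrite (mult_aut1 (Hsigma t)), !nf_mul1r; exact Hc.
  - rewrite (mult_aut0 (Hsigma i)), !nf_mulr0; apply nf_add0.
Qed.

Lemma Fsr_unit_neq0 t : Fsr_unit t <> vzero.
Proof.
  intro H; apply (f_equal (fun v => v t)) in H; unfold Fsr_unit, Fsr_zero in H.
  destruct (excluded_middle_informative (t = t)); [exact (nf_one_neq0 H)|auto].
Qed.

Definition class_part (t : I) (v : I -> F) (i : I) : F :=
  if excluded_middle_informative (approx sigma rho i t) then v i else 0.

Lemma class_part_in t v i : approx sigma rho i t -> class_part t v i = v i.
Proof. unfold class_part; destruct excluded_middle_informative; tauto. Qed.

Lemma class_part_out t v i : ~ approx sigma rho i t -> class_part t v i = 0.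
Proof. unfold class_part; destruct excluded_middle_informative; tauto. Qed.

Lemma class_part_class_space t v : Fsr_car v -> class_space t (class_part t v).
Proof.
  intros [s Hs]; split; [|apply class_part_out].
  exists s; intros j Hj; apply Hs; intro Hv; apply Hj; unfold class_part.
  destruct excluded_middle_informative; auto.
Qed.

Lemma Fsr_unit_add_not_qk t w l : w <> vzero -> l <> 0 ->
  (forall j, w j <> 0 -> ~ approx sigma rho j t) -> ~ Fsr_qk (vadd (Fsr_unit t) (smul l w)).
Proof.
  intros Hw Hl Hwout Qe; destruct (Fsr_neq0 Hw) as [k Hk].
  apply (Hwout k Hk), (Fsr_qk_approx Qe).
  - rewrite Fsr_addr0_at.
    + unfold Fsr_unit; destruct excluded_middle_informative; [apply nf_one_neq0|auto].
    + apply Fsr_smul0_at, NNPP; intro H; apply (Hwout t H), approx_refl.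
  - rewrite Fsr_add0l_at.
    + unfold Fsr_smul; intro H; apply nf_mul_eq0 in H as [H|H]; [|contradiction].
      apply Hl, (mult_aut_eq0 (Hrho k)), H.
    + apply (proj2 (Fsr_unit_class_space t)), Hwout, Hk.
Qed.

(* A [v] in [W] outside [class_space t], minus its class part, shrinks to a quasi-kernel
   [w] supported outside the class of [t], which is not compatible with [e_t]. *)
Lemma class_space_maximal t :
  maximal_regular_subspace vadd vzero smul (@Fsr_car F I) (class_space t).
Proof.
  split; [apply class_space_subspace|split; [apply class_space_regular|]].
  intros W [HWcar [_ [HWadd HWsmul]]] HWreg HW v Wv.
  split; [apply HWcar, Wv|]; intros i Hi; apply NNPP; intro Hvi.
  set (v' := vadd v (smul (- (1)) (class_part t v))).
  assert (Hv't : forall j, approx sigma rho j t -> v' j = 0).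
  { intros j Hj; apply (mult_aut_inj (Hsigma j)); unfold v'.
    rewrite sigma_Fsr_add, sigma_Fsr_oppr, class_part_in, nf_addrN by exact Hj.
    symmetry; apply mult_aut0, Hsigma. }
  assert (Hv'out : forall j, ~ approx sigma rho j t -> v' j = v j).
  { intros j Hj; apply Fsr_addr0_at, Fsr_smul0_at, class_part_out, Hj. }
  destruct (Fsr_qk_below HWadd HWsmul (v := v')) as [w [Ww [Qw [Hw Hwv']]]].
  - apply HWadd, HWsmul, HW, class_part_class_space, HWcar; exact Wv.
  - apply Fsr_car_add, Fsr_car_smul, class_part_class_space; apply HWcar, Wv.
  - intro H0; apply Hvi; rewrite <- (Hv'out i Hi), H0; reflexivity.
  - destruct (HWreg (Fsr_unit t) w) as [_ [_ [_ [_ [l [Hl [_ Qe]]]]]]];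
      [split; [apply HW, Fsr_unit_class_space|apply Fsr_unit_qk]|apply Fsr_unit_neq0
      |split; assumption|exact Hw|].
    apply (Fsr_unit_add_not_qk (t := t) Hw Hl); [|exact Qe].
    intros j Hj Hjt; apply (Hwv' j Hj), Hv't, Hjt.
Qed.

Lemma fin_supp_restrict (P : I -> Prop) (v : I -> F) :
  fin_supp v -> fin_supp (fun p : {i | P i} => v (proj1_sig p)).
Proof.
  intros [s Hs].
  exists (flat_map (fun x => match excluded_middle_informative (P x) with
                             | left h => [exist P x h]
                             | right _ => []
                             end) s).
  intros [j h] Hj; apply in_flat_map; exists j; split; [apply Hs, Hj|].
  destruct excluded_middle_informative as [h'|]; [|contradiction].
  left; f_equal; apply proof_irrelevance.
Qed.

Lemma Psi_image_class_space t : Psi_image sigma rho t = class_space t.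
Proof.
  extensionality v; apply propositional_extensionality; unfold Psi_image, Psi; split.
  - intros [a [[s Hs] ->]]; split.
    + exists (map (@proj1_sig _ _) s); intros j Hj.
      destruct excluded_middle_informative as [h|]; [|contradiction].
      apply (in_map (@proj1_sig _ _) s (exist _ j h)), Hs, Hj.
    + intros i Hi; destruct excluded_middle_informative; [contradiction|reflexivity].
  - intros [Hv Hv0]; exists (fun p => v (proj1_sig p)); split; [apply fin_supp_restrict, Hv|].
    extensionality i; destruct excluded_middle_informative; [reflexivity|].
    apply Hv0; assumption.
Qed.

Lemma vsum_cons w ws : vsum (w :: ws) = vadd w (vsum ws).
Proof. reflexivity. Qed.

Lemma vsum_at0 ws i : (forall w, In w ws -> w i = 0) -> vsum ws i = 0.
Proof.
  induction ws as [|w ws IH]; intro H; [reflexivity|].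
  rewrite vsum_cons, Fsr_add0l_at; [apply IH|apply H; left; reflexivity].
  intros w' Hw'; apply H; right; exact Hw'.
Qed.

Lemma vsum_at_single ws1 w ws2 i :
  (forall w', In w' (ws1 ++ ws2) -> w' i = 0) -> vsum (ws1 ++ w :: ws2) i = w i.
Proof.
  induction ws1 as [|w1 ws1 IH]; intro H.
  - rewrite app_nil_l, vsum_cons, Fsr_addr0_at; [reflexivity|apply vsum_at0, H].
  - rewrite <- app_comm_cons, vsum_cons, Fsr_add0l_at; [apply IH|apply H; left; reflexivity].
    intros w' Hw'; apply H; right; exact Hw'.
Qed.

Lemma Fsr_car_vsum ws : (forall w, In w ws -> Fsr_car w) -> Fsr_car (vsum ws).
Proof.
  induction ws as [|w ws IH]; intro H; [exists []; intros j Hj; exact (Hj eq_refl)|].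
  rewrite vsum_cons; apply Fsr_car_add; [apply H; left; reflexivity|].
  apply IH; intros w' Hw'; apply H; right; exact Hw'.
Qed.

Section Representatives.
Variable Tset : I -> Prop.
Hypothesis HT : full_set_of_reps (approx sigma rho) Tset.
Local Notation in_family :=
  (fun p : I * (I -> F) => Tset (fst p) /\ class_space (fst p) (snd p)).

Lemma rep_unique i t1 t2 :
  Tset t1 -> approx sigma rho i t1 -> Tset t2 -> approx sigma rho i t2 -> t1 = t2.
Proof.
  intros H1 H1i H2 H2i; destruct (HT i) as [t [_ Ht]].
  rewrite (Ht t1), (Ht t2); auto.
Qed.

Lemma class_space_span v : Fsr_car v ->
  exists l, NoDup (map fst l) /\ Forall in_family l /\ v = vsum (map snd l).
Proof.
  intros Hv; destruct (choice (fun i t => Tset t /\ approx sigma rho i t)) as [r Hr].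
  { intro i; destruct (HT i) as [t [Ht _]]; exists t; exact Ht. }
  destruct Hv as [s Hs].
  set (ts := nodup (@classic_eq_dec I) (map r s)).
  assert (Hts : forall t, In t ts -> Tset t).
  { intros t Ht; apply nodup_In, in_map_iff in Ht as [i [<- _]]; apply Hr. }
  exists (map (fun t => (t, class_part t v)) ts); split; [|split].
  - rewrite map_map, map_id; apply NoDup_nodup.
  - apply Forall_forall; intros p Hp; apply in_map_iff in Hp as [t [<- Ht]].
    split; [apply Hts, Ht|apply class_part_class_space; exists s; exact Hs].
  - rewrite map_map; extensionality i; cbn; symmetry.
    destruct (classic (v i = 0)) as [Hvi|Hvi].
    + rewrite Hvi; apply vsum_at0; intros w Hw; apply in_map_iff in Hw as [t [<- _]].
      unfold class_part; destruct excluded_middle_informative; [exact Hvi|reflexivity].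
    + assert (Hri : In (r i) ts) by apply nodup_In, in_map, Hs, Hvi.
      destruct (in_split _ _ Hri) as [ts1 [ts2 Hsplit]].
      assert (Hri' : ~ In (r i) (ts1 ++ ts2))
        by (apply NoDup_remove_2; rewrite <- Hsplit; apply NoDup_nodup).
      rewrite Hsplit, map_app; cbn [map]; rewrite vsum_at_single; [apply class_part_in, Hr|].
      intros w Hw; rewrite <- map_app in Hw; apply in_map_iff in Hw as [t [<- Ht]].
      apply class_part_out; intro Hit; apply Hri'.
      assert (Htt : In t ts)
        by (rewrite Hsplit; apply in_app_iff in Ht as [|]; apply in_app_iff;
            auto using in_cons).
      rewrite (rep_unique (proj1 (Hr i)) (proj2 (Hr i)) (Hts t Htt) Hit); exact Ht.
Qed.

Lemma class_space_independent l : NoDup (map fst l) -> Forall in_family l ->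
  vsum (map snd l) = vzero -> Forall (fun p => snd p = vzero) l.
Proof.
  intros Hnd Hl Hsum; rewrite Forall_forall in Hl |- *; intros p Hp.
  extensionality i; unfold Fsr_zero.
  destruct (Hl p Hp) as [Hpt [_ Hp0]].
  destruct (classic (approx sigma rho i (fst p))) as [Hip|]; [|apply Hp0; assumption].
  destruct (in_split _ _ Hp) as [l1 [l2 ->]].
  assert (Hfst : ~ In (fst p) (map fst l1 ++ map fst l2))
    by (apply NoDup_remove_2; rewrite map_app in Hnd; exact Hnd).
  apply (f_equal (fun w => w i)) in Hsum; rewrite map_app in Hsum; cbn [map] in Hsum.
  rewrite vsum_at_single in Hsum; [exact Hsum|].
  intros w Hw; rewrite <- map_app in Hw; apply in_map_iff in Hw as [q [<- Hq]].
  assert (Hql : In q (l1 ++ p :: l2))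
    by (apply in_app_iff in Hq as [|]; apply in_app_iff; auto using in_cons).
  destruct (Hl q Hql) as [Hqt [_ Hq0]].
  apply Hq0; intro Hiq; apply Hfst; rewrite <- map_app.
  rewrite (rep_unique Hpt Hip Hqt Hiq); apply in_map, Hq.
Qed.

Lemma class_space_direct_sum :
  internal_direct_sum vadd vzero Tset class_space (@Fsr_car F I).
Proof.
  split; [intro v; split; [apply class_space_span|]|apply class_space_independent].
  intros [l [_ [Hl ->]]]; apply Fsr_car_vsum; intros w Hw.
  apply in_map_iff in Hw as [p [<- Hp]]; rewrite Forall_forall in Hl.
  apply (Hl p Hp).
Qed.

End Representatives.
End Fsr.

Theorem mainTheorem8 (F : nearField) (I : Type) (sigma rho : I -> F -> F)
  (Hsigma : forall i, mult_aut (sigma i)) (Hrho : forall i, mult_aut (rho i))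
  (Tset : I -> Prop) (HT : full_set_of_reps (approx sigma rho) Tset) :
  regular_decomposition_family (Fsr_add sigma) (@Fsr_zero F I) (Fsr_smul rho)
    Tset (Psi_image sigma rho) (@Fsr_car F I).
Proof.
  assert (HPsi : Psi_image sigma rho = class_space sigma rho)
    by (extensionality t; apply Psi_image_class_space).
  rewrite HPsi; split.
  - apply class_space_direct_sum; assumption.
  - intros t _; apply class_space_maximal; assumption.
Qed.
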